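(* Let $k\ge 2$ be an integer and $\widehat B=\begin{pmatrix}\hat e&\hat f\\\hat g&\hat h\end{pmatrix}\in M_2(\mathbb Z_k)$, where $e,f,g,h\in\mathbb Z$. Then $|\mathrm{Cen}_{M_2(\mathbb Z_k)}(\widehat B)|=(kd)^2$, where $d=\gcd(e-h,f,g,k)$.
   Context: $\mathbb Z_k=\mathbb Z/k\mathbb Z$, $\hat x$ the residue of $x$; $\mathrm{Cen}_S(s)=\{t\in S:ts=st\}$. *)

From HB Require Import structures.
From mathcomp Require Import all_boot all_order all_algebra.
Set Implicit Arguments. Unset Strict Implicit. Unset Printing Implicit Defensive.
Import GRing.Theory Num.Theory.

Definition Cen (T : finType) (mul : T -> T -> T) (s : T) : {set T} :=
  [set t | mul t s == mul s t].

Definition matZk (k : nat) (e f g h : int) : 'M['Z_k]_2 :=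
  \matrix_(i < 2, j < 2)
    ((if (i == 0 :> nat) then (if (j == 0 :> nat) then e else f)
      else (if (j == 0 :> nat) then g else h)) %:~R)%R.

(* Write M = (a b; c d) and B = (e f; g h).  Then M B = B M iff all 2 x 2
   minors of the two vectors (a - d, b, c) and (e - h, f, g) vanish, i.e. the
   vectors are "parallel"; the entry d of M is free.  Hence
   |Cen(B)| = k * #{y in (Z/kZ)^3 | y parallel to (e - h, f, g)}.

   Over any finite commutative ring R, let v be unimodular (u . v = 1 for some
   u) and let ann(D) = {s | D s = 0}.  Every y splits as y = (u . y) v + proj y
   with u . proj y = 0, and y is parallel to D v iff D kills proj y.  Counting
   through this splitting, the vectors parallel to D v number
   |R| * |ann D|^(n-1): the kernel K = {z | D z = 0, u . z = 0} satisfies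
   |ann D|^n = |ann D| * |K|, by the same splitting.

   Finally (e - h, f, g) = D (E', f', g') with D = gcd(e - h, f, g) and
   (E', f', g') unimodular by Bezout, and in Z/kZ the annihilator of D has
   gcd(D, k) elements, which gives |Cen(B)| = k * k * gcd(D, k)^2. *)

From mathcomp Require Import all_boot all_order all_algebra.
From mathcomp Require Import ring.
Import GRing.Theory.
Set Implicit Arguments. Unset Strict Implicit. Unset Printing Implicit Defensive.

Lemma count_multiples a b : 0 < a -> \sum_(0 <= s < b * a) (a %| s) = b.
Proof.
move=> a_gt0; elim: b => [|b IHb]; first by rewrite mul0n big_geq.
rewrite mulSn addnC (@big_cat_nat _ _ _ (b * a)) ?leq_addr //= IHb.
rewrite -{1}[b * a]add0n big_addn addKn big_ltn // add0n dvdn_mull //.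
rewrite big_nat_cond big1 ?addn0 ?addn1 // => s /andP[/andP[s_gt0 s_lt_a] _].
rewrite dvdn_addl ?dvdn_mull //; case: (boolP (a %| s)) => // /(dvdn_leq s_gt0).
by rewrite leqNgt s_lt_a.
Qed.

Lemma card_multiples n a :
  0 < a -> a %| n -> #|[set s : 'I_n | a %| s]| = n %/ a.
Proof.
move=> a_gt0 a_dvd_n; rewrite -sum1dep_card big_mkcond /=.
rewrite (eq_bigr (fun s : 'I_n => nat_of_bool (a %| s))); last by move=> s; case: ifP.
by rewrite -(big_mkord xpredT (fun s => nat_of_bool (a %| s))) -{1}(divnK a_dvd_n)
  count_multiples.
Qed.

(* The annihilator of D in Z/nZ has gcd(D, n) elements: n | D s iff
   n / gcd(D, n) | s. *)
Lemma card_ord_ann n D : 0 < n -> #|[set s : 'I_n | n %| D * s]| = gcdn D n.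
Proof.
move=> n_gt0; set g := gcdn D n; set n' := n %/ g.
have g_gt0 : 0 < g by rewrite gcdn_gt0 n_gt0 orbT.
have n_eq : n = n' * g by rewrite divnK ?dvdn_gcdr.
have n'_gt0 : 0 < n' by rewrite -(ltn_pmul2r g_gt0) -n_eq.
have -> : [set s : 'I_n | n %| D * s] = [set s : 'I_n | n' %| s].
  apply/setP => s; rewrite !inE.
  have -> : (n %| D * s) = (n %| gcdn (D * s) (n * s)).
    by rewrite dvdn_gcd (dvdn_mulr _ (dvdnn n)) andbT.
  by rewrite -muln_gcdl -/g {1}n_eq mulnC dvdn_pmul2l.
by rewrite card_multiples // {1}n_eq ?dvdn_mulr // mulKn.
Qed.

Local Open Scope ring_scope.

(* The same count in the ring 'Z_k, whose carrier is 'I_k when k > 1. *)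
Lemma card_Zp_ann k D :
  (1 < k)%N -> #|[set s : 'Z_k | D%:R * s == 0]| = gcdn D k.
Proof.
move=> k_gt1; rewrite -[in RHS](Zp_cast k_gt1) -card_ord_ann //.
congr #|pred_of_set _|; apply/setP => s; rewrite !inE.
have mod_k x : (x %% k == 0)%N = (x %% (Zp_trunc k).+2 == 0)%N by rewrite Zp_cast.
by rewrite -[s in D%:R * s]natr_Zp -natrM -val_eqE /= val_Zp_nat // mod_k.
Qed.

Lemma int_triple_primitive (E f g : int) :
  exists (E' f' g' u1 u2 u3 : int),
  let D := (gcdn (gcdn `|E| `|f|) `|g|)%:Z in
  [/\ E = D * E', f = D * f', g = D * g' & u1 * E' + u2 * f' + u3 * g' = 1].
Proof.
set D := gcdn (gcdn `|E| `|f|) `|g|.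
have dvdE : (D %| `|E|)%N by rewrite /D (dvdn_trans (dvdn_gcdl _ _)) ?dvdn_gcdl.
have dvdf : (D %| `|f|)%N by rewrite /D (dvdn_trans (dvdn_gcdl _ _)) ?dvdn_gcdr.
have dvdg : (D %| `|g|)%N by rewrite /D dvdn_gcdr.
have [D0|D_neq0] := eqVneq D 0%N.
  move: dvdE dvdf dvdg; rewrite D0 !dvd0n !absz_eq0 => /eqP-> /eqP-> /eqP->.
  by exists 1, 0, 0, 1, 0, 0; split; rewrite ?mulr0 ?mul0r // mulr1 !addr0.
have divK x : (D %| `|x|)%N -> x = D%:Z * (x %/ D%:Z)%Z.
  by move=> dvdx; rewrite mulrC divzK // dvdzE absz_nat.
have [a [b bezout_Ef]] := Bezoutz E f.
have [c [w bezout_g]] := Bezoutz (gcdz E f) g.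
have gcd_eq : gcdz (gcdz E f) g = D%:Z by rewrite /gcdz absz_nat.
move: (divK E dvdE) (divK f dvdf) (divK g dvdg).
set E' := (E %/ D%:Z)%Z; set f' := (f %/ D%:Z)%Z; set g' := (g %/ D%:Z)%Z.
clearbody E' f' g' => hE hf hg; exists E', f', g', (c * a), (c * b), w; split => //.
apply: (@mulfI _ D%:Z); first by rewrite eqz_nat.
rewrite mulr1 -[X in _ = X]gcd_eq -bezout_g -bezout_Ef hE hf hg; ring.
Qed.

Section ParallelVectors.
Variables (R : finComNzRingType) (n : nat).
Implicit Types (d t : R) (u v y z : 'rV[R]_n).

Definition dotv u y : R := \sum_i u 0 i * y 0 i.

Definition parallel v y : bool :=
  [forall i, forall j, v 0 i * y 0 j == v 0 j * y 0 i].

Definition ann d : {set R} := [set s | d * s == 0].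

Definition annv d : {set 'rV[R]_n} :=
  [set y : 'rV[R]_n | [forall i, y 0 i \in ann d]].

Lemma dotvDZ u y t z : dotv u (y + t *: z) = dotv u y + t * dotv u z.
Proof.
rewrite /dotv mulr_sumr -big_split /=; apply: eq_bigr => i _.
by rewrite !mxE mulrDr mulrCA.
Qed.

(* Vectors with entries in ann d are functions 'I_n -> ann d. *)
Lemma card_annv d : #|annv d| = (#|ann d| ^ n)%N.
Proof.
pose f y := [ffun i => y 0 i]; pose g (w : {ffun 'I_n -> R}) := \row_i w i.
have fK : cancel f g by move=> y; apply/rowP => i; rewrite mxE ffunE.
have gK : cancel g f by move=> w; apply/ffunP => i; rewrite !ffunE mxE.
rewrite -[in RHS](card_ord n) -card_ffun_on.
rewrite -(on_card_preimset (onW_bij _ (Bijective fK gK))).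
by apply: eq_card => y; rewrite !inE; apply: eq_forallb => i; rewrite ffunE.
Qed.

Variables (d : R) (u v : 'rV[R]_n).
Hypothesis uv1 : dotv u v = 1.

Definition proj y := y - dotv u y *: v.

Definition kerv : {set 'rV[R]_n} :=
  [set z : 'rV[R]_n | (z \in annv d) && (dotv u z == 0)].

(* A unimodular vector has at least one entry. *)
Lemma dim_gt0 : (0 < n)%N.
Proof.
rewrite lt0n; apply/eqP => n0; move: uv1; rewrite /dotv big1 => [/eqP|i _].
  by rewrite eq_sym oner_eq0.
by have := ltn_ord i; rewrite {2}n0.
Qed.

Lemma proj_decomp y : proj y + dotv u y *: v = y.
Proof. exact: subrK. Qed.

Lemma proj_entry_decomp y i : y 0 i = proj y 0 i + dotv u y * v 0 i.
Proof. by rewrite -{1}[y]proj_decomp !mxE. Qed.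

Lemma dotv_proj y : dotv u (proj y) = 0.
Proof. by rewrite /proj -scaleNr dotvDZ uv1 mulNr mulr1 subrr. Qed.

Lemma proj_entry y i :
  proj y 0 i = \sum_j u 0 j * (y 0 i * v 0 j - v 0 i * y 0 j).
Proof.
have -> : \sum_j u 0 j * (y 0 i * v 0 j - v 0 i * y 0 j) =
          y 0 i * dotv u v - v 0 i * dotv u y.
  by rewrite /dotv !mulr_sumr -sumrB; apply: eq_bigr => j _; ring.
by rewrite uv1 mulr1 !mxE mulrC.
Qed.

(* y |-> (u . y, proj y) is a bijection from R^n onto R x ker(u . _); in
   particular it counts the vectors with u . y in A and proj y in kerv. *)
Lemma card_split (A : {set R}) :
  #|[set y | (dotv u y \in A) && (proj y \in kerv)]| = (#|A| * #|kerv|)%N.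
Proof.
pose split y := (dotv u y, proj y); pose join (w : R * 'rV[R]_n) := w.2 + w.1 *: v.
rewrite -cardsX -(@on_card_preimset _ _ split).
  by apply: eq_card => y; rewrite !inE.
exists join => [y _ | [t z]]; first exact: proj_decomp.
rewrite !inE /= => /andP[_ /andP[_ /eqP z_ker]].
have dot_join : dotv u (z + t *: v) = t by rewrite dotvDZ z_ker uv1 add0r mulr1.
by rewrite /split /join /= /proj dot_join addrK.
Qed.

Lemma parallel_proj y : parallel (d *: v) y = (proj y \in kerv).
Proof.
rewrite !inE dotv_proj eqxx andbT; apply/forallP/forallP => [par i | ann_proj i].
  rewrite proj_entry inE mulr_sumr big1 // => j _.
  have /forallP/(_ j)/eqP := par i; rewrite !mxE => minor.
  have -> : d * (u 0 j * (y 0 i * v 0 j - v 0 i * y 0 j)) =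
            u 0 j * (d * v 0 j * y 0 i - d * v 0 i * y 0 j) by ring.
  by rewrite minor subrr mulr0.
apply/forallP => j; rewrite !mxE (proj_entry_decomp y i) (proj_entry_decomp y j).
have dz k : d * proj y 0 k = 0 by apply/eqP; have := ann_proj k; rewrite inE.
apply/eqP/subr0_eq.
transitivity (v 0 i * (d * proj y 0 j) - v 0 j * (d * proj y 0 i)); first ring.
by rewrite !dz !mulr0 subrr.
Qed.

Lemma annv_proj y : (y \in annv d) = (dotv u y \in ann d) && (proj y \in kerv).
Proof.
rewrite !inE dotv_proj eqxx andbT.
apply/forallP/andP => [ann_y | [/eqP ann_dot /forallP ann_proj] i].
  have dy k : d * y 0 k = 0 by apply/eqP; have := ann_y k; rewrite inE.
  have ann_dot : d * dotv u y = 0.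
    by rewrite /dotv mulr_sumr big1 // => k _; rewrite mulrCA dy mulr0.
  split; first by rewrite ann_dot.
  by apply/forallP => i; rewrite inE !mxE mulrBr mulrA ann_dot mul0r dy subr0.
have := ann_proj i; rewrite !inE (proj_entry_decomp y i).
by rewrite mulrDr mulrA ann_dot mul0r addr0.
Qed.

(* Hence |ann d|^n = |ann d| * |kerv|. *)
Lemma card_kerv : #|kerv| = (#|ann d| ^ n.-1)%N.
Proof.
have ann_gt0 : (0 < #|ann d|)%N by apply/card_gt0P; exists 0; rewrite inE mulr0.
apply/eqP; rewrite -(eqn_pmul2l ann_gt0) -expnS prednK ?dim_gt0 //.
by rewrite -card_split -card_annv; apply/eqP/eq_card => y; rewrite annv_proj inE.
Qed.

Lemma card_parallel : #|[set y | parallel (d *: v) y]| = (#|R| * #|ann d| ^ n.-1)%N.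
Proof.
rewrite -cardsT -card_kerv -card_split.
by apply: eq_card => y; rewrite inE parallel_proj inE in_setT.
Qed.
End ParallelVectors.

Section TwoByTwo.
Variable R : finComNzRingType.
Implicit Types (a b c x y z : R) (A B C M : 'M[R]_2).

Definition vec3 a b c : 'rV[R]_3 := \row_(i < 3) [:: a; b; c]`_i.

Definition mx2 a b c x : 'M[R]_2 :=
  \matrix_(i, j) if i == 0 :> nat then (if j == 0 :> nat then a else b)
                  else (if j == 0 :> nat then c else x).

(* Writing M = M 1 1 * I + (x b; c 0), only the vector (x, b, c) of the
   second summand matters for commutation. *)
Definition mx2_vec M : 'rV[R]_3 := vec3 (M 0 0 - M 1 1) (M 0 1) (M 1 0).

Lemma vec3K (w : 'rV[R]_3) : vec3 (w 0 0) (w 0 1) (w 0 2) = w.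
Proof.
by apply/rowP => -[[|[|[|?]]] ?]; rewrite !mxE //=; congr (w 0 _); apply: val_inj.
Qed.

Lemma parallel3E a b c x y z :
  parallel (vec3 a b c) (vec3 x y z) =
  [&& a * y == b * x, a * z == c * x & b * z == c * y].
Proof.
apply/forallP/and3P => [par | [/eqP ab /eqP ac /eqP bc] i].
  by split; [have := forallP (par 0) 1 | have := forallP (par 0) 2 |
             have := forallP (par 1) 2]; rewrite !mxE.
apply/forallP => j; rewrite !mxE.
by case: i j => -[|[|[|?]]] ? [[|[|[|?]]] ?] //=; rewrite ?ab ?ac ?bc.
Qed.

Lemma ord2_cases (i : 'I_2) : i = 0 \/ i = 1.
Proof. by case: i => -[|[|?]] ? //; [left | right]; apply: val_inj. Qed.

Lemma mx2_eqE A C :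
  (A == C) = [&& A 0 0 == C 0 0, A 0 1 == C 0 1, A 1 0 == C 1 0 & A 1 1 == C 1 1].
Proof.
apply/eqP/and4P => [-> | [/eqP e00 /eqP e01 /eqP e10 /eqP e11]]; first by rewrite !eqxx.
by apply/matrixP => i j; case: (ord2_cases i) (ord2_cases j) => -> [] ->.
Qed.

Lemma mulmx2E A C i j : (A *m C) i j = A i 0 * C 0 j + A i 1 * C 1 j.
Proof.
rewrite mxE !big_ord_recl big_ord0 addr0; congr (A i _ * C _ j + A i _ * C _ j).
all: exact: val_inj.
Qed.

Lemma eq_shift (p q r s : R) : p - q = r - s -> (p == q) = (r == s).
Proof. by move=> same_diff; rewrite -subr_eq0 same_diff subr_eq0. Qed.

(* M commutes with B iff mx2_vec M is parallel to mx2_vec B: the four entries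
   of M B - B M are, up to sign, the three minors of these vectors. *)
Lemma commute2E B M :
  (M *m B == B *m M) = parallel (mx2_vec B) (mx2_vec M).
Proof.
rewrite mx2_eqE !mulmx2E parallel3E.
set a := M 0 0; set b := M 0 1; set c := M 1 0; set d := M 1 1.
set e := B 0 0; set f := B 0 1; set g := B 1 0; set h := B 1 1.
rewrite (@eq_shift (a * e + b * g) _ (g * b) (f * c)); last by ring.
rewrite (@eq_shift (a * f + b * h) _ (f * (a - d)) ((e - h) * b)); last by ring.
rewrite (@eq_shift (c * e + d * g) _ ((e - h) * c) (g * (a - d))); last by ring.
rewrite (@eq_shift (c * f + d * h) _ (f * c) (g * b)); last by ring.
rewrite [g * b == _]eq_sym [f * (a - d) == _]eq_sym.
by case: (f * c == g * b); rewrite ?andbT ?andbF.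
Qed.

(* M |-> (mx2_vec M, M 1 1) is a bijection from Cen(B) onto
   {y parallel to mx2_vec B} x R. *)
Lemma card_cen2 B :
  #|Cen (@mulmx R 2 2 2) B| =
  (#|[set y | parallel (mx2_vec B) y]| * #|R|)%N.
Proof.
pose coords M := (mx2_vec M, M 1 1).
pose build (w : 'rV[R]_3 * R) := mx2 (w.1 0 0 + w.2) (w.1 0 1) (w.1 0 2) w.2.
rewrite -cardsT -cardsX -(@on_card_preimset _ _ coords).
  by apply: eq_card => M; rewrite !inE andbT commute2E.
exists build => [M _ | [w s] _].
  apply/matrixP => i j; rewrite !mxE.
  by case: (ord2_cases i) (ord2_cases j) => -> [] ->; rewrite /= ?subrK.
by rewrite /coords /build /mx2_vec !mxE /= addrK vec3K.
Qed.

End TwoByTwo.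

Lemma matZk_vec k e f g h :
  exists (u v : 'rV['Z_k]_3), dotv u v = 1 /\
    mx2_vec (matZk k e f g h) = (gcdn (gcdn `|e - h| `|f|) `|g|)%:R *: v.
Proof.
have [E' [f' [g' [u1 [u2 [u3 [hE hf hg bezout]]]]]]] :=
  int_triple_primitive (e - h) f g.
set D := gcdn _ _ in hE hf hg *.
exists (vec3 u1%:~R u2%:~R u3%:~R), (vec3 E'%:~R f'%:~R g'%:~R); split.
  by rewrite /dotv !big_ord_recl big_ord0 !mxE /= addr0 addrA -!intrM -!intrD bezout.
apply/rowP => -[[|[|[|?]]] ?]; rewrite !mxE //=.
- by rewrite -intrB hE intrM.
- by rewrite {1}hf intrM.
- by rewrite {1}hg intrM.
Qed.

Local Close Scope ring_scope.

Theorem corollary3p9 (k : nat) (e f g h : int) : (1 < k)%N ->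
  #|Cen (@mulmx 'Z_k 2 2 2) (matZk k e f g h)| =
  (k * gcdn (gcdn (gcdn `|e - h|%N `|f|%N) `|g|%N) k) ^ 2.
Proof.
move=> k_gt1; rewrite card_cen2.
have [u [v [uv1 ->]]] := matZk_vec k e f g h.
rewrite (card_parallel _ uv1) card_Zp_ann // card_ord Zp_cast //.
by rewrite mulnAC mulnn -expnMn.
Qed.
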